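(* The Bergman projection $P$ on the bidisc $\mathbb{D}^2$ is not of weak-type $(1,1)$: there is no constant $C>0$ such that for all bounded measurable functions $f$ on $\mathbb{D}^2$ and all $\lambda>0$, $$\left|\{(z_1,z_2)\in\mathbb{D}^2 : |P(f)(z_1,z_2)|>\lambda\}\right| \le \frac{C\,\|f\|_{L^1(\mathbb{D}^2)}}{\lambda}.$$
   Context: $\mathbb{D}$ is the unit disc in $\mathbb{C}$, $\mathbb{D}^2=\mathbb{D}\times\mathbb{D}$, $dV$ is Lebesgue measure and $|U|$ denotes the Lebesgue measure of a set $U$. The Bergman projection on $\mathbb{D}^2$ is the orthogonal projection of $L^2(\mathbb{D}^2)$ onto the closed subspace of square-integrable holomorphic functions; it is given by $P(f)(z)=\int_{\mathbb{D}^2}K_{\mathbb{D}^2}(z;\bar w)f(w)\,dV(w)$ with $K_{\mathbb{D}^2}(z;\bar w)=\prod_{j=1}^2\frac{1}{\pi(1-z_j\bar w_j)^2}$. *)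

From HB Require Import structures.
From mathcomp Require Import all_boot all_order all_algebra.
From mathcomp Require Import all_classical all_reals all_analysis.
From mathcomp Require Import complex.
Set Implicit Arguments. Unset Strict Implicit. Unset Printing Implicit Defensive.
Import Order.TTheory GRing.Theory Num.Theory.
Local Open Scope classical_set_scope.
Local Open Scope ring_scope.

(* A point of C^2 = R^4 is (((x1, y1), x2), y2), standing for
   (z1, z2) = (x1 + i y1, x2 + i y2). *)
Notation C2pt R := (((measurableTypeR R * measurableTypeR R) *
                      measurableTypeR R) * measurableTypeR R)%type.

Section Bidisc.
Variable R : realType.

Local Notation leb1 := (@lebesgue_measure R).
Definition leb4 : {measure set (C2pt R) -> \bar R} :=
  (((leb1 \x leb1) \x leb1) \x leb1)%E.

Definition z1 (p : C2pt R) : R[i] := (p.1.1.1 +i* p.1.1.2)%C.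
Definition z2 (p : C2pt R) : R[i] := (p.1.2 +i* p.2)%C.

Definition cabs (z : R[i]) : R := Num.sqrt (complex.Re z ^+ 2 + complex.Im z ^+ 2).

Definition in_disc (z : R[i]) : Prop := cabs z < 1.
Definition bidisc : set (C2pt R) := [set p | in_disc (z1 p) /\ in_disc (z2 p)].

Definition bergman_kernel (z w : C2pt R) : R[i] :=
  ((pi%:C * (1 - z1 z * (z1 w)^*) ^+ 2)^-1 *
   (pi%:C * (1 - z2 z * (z2 w)^*) ^+ 2)^-1)%C.

Definition Cintegral (D : set (C2pt R)) (g : C2pt R -> R[i]) : R[i] :=
  (Rintegral leb4 D (fun w => complex.Re (g w)) +i* Rintegral leb4 D (fun w => complex.Im (g w)))%C.

Definition bergman_proj (f : C2pt R -> R[i]) (z : C2pt R) : R[i] :=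
  Cintegral bidisc (fun w => bergman_kernel z w * f w).

Definition L1norm (f : C2pt R -> R[i]) : \bar R :=
  (\int[leb4]_(w in bidisc) (cabs (f w))%:E)%E.

End Bidisc.

Arguments bidisc R : clear implicits.

From HB Require Import structures.
From mathcomp Require Import all_boot all_order all_algebra.
From mathcomp Require Import all_classical all_reals all_analysis.
From mathcomp Require Import complex.
From mathcomp Require Import ring lra measurable_realfun.
Import Order.TTheory GRing.Theory Num.Theory.
Local Open Scope classical_set_scope.
Local Open Scope ring_scope.

(* Test the weak-type inequality on the indicator f of a tiny box S at scale
   h / 64, h = 2^-N, next to the boundary point (1, 1) of the bidisc.  For
   0 < j < N let B_j be the box where 1 - z_1 has size about 2^-j and
   1 - z_2 size about 2^-(N-j), both with small argument.  For z in B_j and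
   w in S the numbers 1 - z_k conj(w_k) lie in a narrow sector around the
   positive reals and their product has size about h, so
   Re K(z; conj w) >= 1 / (640 pi^2 h^2) and Re P f >= |S| / (640 pi^2 h^2)
   on B_j.  The B_j are disjoint, each of measure h^2 / 1024, so the level
   set at half that height has measure at least (N - 1) h^2 / 1024, whereas
   ||f||_1 / lambda <= 1280 pi^2 h^2: the constant C would have to exceed a
   multiple of N. *)

(* No measurability is needed: the integral of a nonnegative function is a
   supremum over the simple functions below it. *)
Lemma ge0_le_integralT d (T : measurableType d) (R : realType)
    (mu : {measure set T -> \bar R}) (f g : T -> \bar R) :
  (forall x, 0 <= f x)%E -> (forall x, f x <= g x)%E ->
  (\int[mu]_x f x <= \int[mu]_x g x)%E.
Proof.
move=> f0 fg; have g0 x : (0 <= g x)%E by apply: le_trans (fg x).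
rewrite !ge0_integralTE//; apply: ereal_sup_le => _ [h hf <-]; exists h => //.
by move=> x; exact: le_trans (hf x) (fg x).
Qed.

Lemma lebesgue_measure_le (R : realType) :
  {homo @lebesgue_measure R : A B / A `<=` B >-> (A <= B)%E}.
Proof.
move=> A B AB; rewrite /lebesgue_measure /lebesgue_stieltjes_measure /measure_extension.
match goal with
| |- is_true (@Order.le _ _ (@mu_ext ?d ?T ?R ?mu _) _) =>
    exact: (@le_mu_ext d T R mu A B AB)
end.
Qed.

Lemma product_measure1_le d1 d2 (T1 : measurableType d1) (T2 : measurableType d2)
    (R : realType) (m1 : {measure set T1 -> \bar R}) (m2 : {measure set T2 -> \bar R}) :
  {homo m2 : A B / A `<=` B >-> (A <= B)%E} ->
  {homo (m1 \x m2)%E : A B / A `<=` B >-> (A <= B)%E}.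
Proof.
move=> m2_le A B AB; apply: ge0_le_integralT => x /=; first exact: measure_ge0.
by apply: m2_le => y; rewrite /xsection /= !inE; exact: AB.
Qed.

Lemma leb4_le (R : realType) : {homo leb4 R : A B / A `<=` B >-> (A <= B)%E}.
Proof. exact/product_measure1_le/lebesgue_measure_le. Qed.

Section corner_box.
Context {R : realType}.
Implicit Types (a b : R) (p : C2pt R).
Local Notation leb1 := (@lebesgue_measure R).

Lemma leb4_setX (A1 A2 A3 A4 : set (measurableTypeR R)) :
  measurable A1 -> measurable A2 -> measurable A3 -> measurable A4 ->
  leb4 R (((A1 `*` A2) `*` A3) `*` A4) = (leb1 A1 * leb1 A2 * leb1 A3 * leb1 A4)%E.
Proof.
move=> mA1 mA2 mA3 mA4.
rewrite [LHS](@product_measure1E _ _ _ _ R ((leb1 \x leb1) \x leb1)%E leb1);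
  try by do ? apply: measurableX.
congr (_ * _)%E.
apply: etrans (@product_measure1E _ _ _ _ R (leb1 \x leb1)%E leb1 _ _ _ mA3) _;
  first exact: measurableX.
by congr (_ * _)%E; exact: product_measure1E.
Qed.

Definition corner_box a b : set (C2pt R) :=
  ((`[1 - 2 * a, 1 - a[%classic `*` `[0, a / 32]%classic) `*`
    `[1 - 2 * b, 1 - b[%classic) `*` `[0, b / 32]%classic.

Lemma corner_boxP a b p : corner_box a b p ->
  [/\ 1 - 2 * a <= p.1.1.1 < 1 - a, 0 <= p.1.1.2 <= a / 32,
      1 - 2 * b <= p.1.2 < 1 - b & 0 <= p.2 <= b / 32].
Proof. by rewrite /corner_box /= !in_itv /= => -[[[-> ->] ->] ->]. Qed.

Lemma measurable_corner_box a b : measurable (corner_box a b).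
Proof. by do 3 apply: measurableX => //. Qed.

Lemma leb4_corner_box a b : 0 < a -> 0 < b ->
  leb4 R (corner_box a b) = ((a * b) ^+ 2 / 1024)%:E.
Proof.
move=> a0 b0; rewrite leb4_setX // !lebesgue_measure_itv /= !lte_fin.
have -> : 1 - 2 * a < 1 - a by lra.
have -> : 0 < a / 32 by lra.
have -> : 1 - 2 * b < 1 - b by lra.
have -> : 0 < b / 32 by lra.
by rewrite -!EFinD -!EFinM; congr EFin; field.
Qed.
End corner_box.

Section sector_estimates.
Context {F : realFieldType}.

Lemma corner_mulconj_bounds (a e x y s t : F) : 0 < a -> 2 * a <= 1 -> 0 < e ->
  64 * e <= a -> 1 - 2 * a <= x < 1 - a -> 0 <= y <= a / 32 ->
  1 - 2 * e <= s < 1 - e -> 0 <= t <= e / 32 ->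
  [/\ a <= 2 * (1 - (x * s + y * t)), 1 - (x * s + y * t) <= 4 * a
    & - (1 - (x * s + y * t)) <= 8 * (x * t - y * s) <= 1 - (x * s + y * t)].
Proof.
move=> a0 a1 e0 ea /andP[x1 x2] /andP[y0 y1] /andP[s1 s2] /andP[t0 t1].
have xs_le : x * s <= (1 - a) * (1 - e).
  by apply: le_trans (ler_wpM2r _ (ltW x2)) _; [lra | apply: ler_wpM2l; lra].
have xs_ge : (1 - 2 * a) * (1 - 2 * e) <= x * s.
  by apply: le_trans (ler_wpM2l _ s1) _; [lra | apply: ler_wpM2r; lra].
have yt_ge : 0 <= y * t by apply: mulr_ge0.
have yt_le : y * t <= a / 32 * e.
  by apply: le_trans (ler_wpM2r t0 y1) _; apply: ler_wpM2l; lra.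
have ys_ge : 0 <= y * s by apply: mulr_ge0; lra.
have ys_le : y * s <= y by rewrite ler_piMr //; lra.
have xt_ge : 0 <= x * t by apply: mulr_ge0; lra.
have xt_le : x * t <= t by rewrite ler_piMl //; lra.
split; [nra | nra | apply/andP; split; nra].
Qed.

Lemma sector_mul_bounds (a b c d : F) : 0 < a -> 0 < c ->
  - a <= 8 * b <= a -> - c <= 8 * d <= c ->
  63 * (a * c) <= 64 * (a * c - b * d) <= 65 * (a * c) /\
  4 * (a * d + b * c) ^+ 2 <= (a * c - b * d) ^+ 2.
Proof.
move=> a0 c0 /andP[b1 b2] /andP[d1 d2].
have h1 : 0 <= (a - 8 * b) * (c - 8 * d) by apply: mulr_ge0; lra.
have h2 : 0 <= (a + 8 * b) * (c + 8 * d) by apply: mulr_ge0; lra.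
have h3 : 0 <= (a - 8 * b) * (c + 8 * d) by apply: mulr_ge0; lra.
have h4 : 0 <= (a + 8 * b) * (c - 8 * d) by apply: mulr_ge0; lra.
have ac0 : 0 < a * c by apply: mulr_gt0.
have bd : - (a * c) <= 64 * (b * d) <= a * c by apply/andP; split; nra.
have ad : - (a * c) <= 8 * (a * d) <= a * c by apply/andP; split; nra.
have bc : - (a * c) <= 8 * (b * c) <= a * c by apply/andP; split; nra.
move: bd ad bc => /andP[? ?] /andP[? ?] /andP[? ?].
split; first by apply/andP; split; lra.
set s := a * d + b * c; set p := a * c - b * d.
have s_bd : - (a * c) <= 4 * s <= a * c by apply/andP; split; rewrite /s; lra.
have p_ge : 63 * (a * c) <= 64 * p by rewrite /p; lra.
case/andP: s_bd => ? ?; nra.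
Qed.

Lemma sector_Re_inv_sqr_bounds (A p s : F) : 0 < A ->
  63 * A <= 64 * p <= 65 * A -> 4 * s ^+ 2 <= p ^+ 2 ->
  2 / (5 * A ^+ 2) <= (p ^+ 2 - s ^+ 2) / (p ^+ 2 + s ^+ 2) ^+ 2 <= 2 / A ^+ 2.
Proof.
move=> A0 /andP[p1 p2] s_le.
have p0 : 0 < p by lra.
have q0 : 0 < p ^+ 2 by rewrite exprn_gt0.
have r0 : 0 <= s ^+ 2 by rewrite sqr_ge0.
have B0 : 0 < A ^+ 2 by rewrite exprn_gt0.
have pA1 : 63 ^+ 2 * A ^+ 2 <= 64 ^+ 2 * p ^+ 2.
  by rewrite -!exprMn; apply: lerXn2r; rewrite ?nnegrE; nra.
have pA2 : 64 ^+ 2 * p ^+ 2 <= 65 ^+ 2 * A ^+ 2.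
  by rewrite -!exprMn; apply: lerXn2r; rewrite ?nnegrE; nra.
move: q0 r0 B0 s_le pA1 pA2; set q := p ^+ 2; set r := s ^+ 2; set B := A ^+ 2.
move=> q0 r0 B0 s_le pA1 pA2.
have D0 : 0 < (q + r) ^+ 2 by rewrite exprn_gt0 //; lra.
apply/andP; split.
  rewrite ler_pdivrMr ?mulr_gt0 // mulrAC ler_pdivlMr //.
  have e1 : (q + r) ^+ 2 <= 25 / 16 * q ^+ 2.
    have : (q + r) ^+ 2 <= (5 / 4 * q) ^+ 2 by apply: lerXn2r; rewrite ?nnegrE; lra.
    by rewrite exprMn; lra.
  nra.
rewrite ler_pdivrMr // mulrAC ler_pdivlMr //.
have : q ^+ 2 <= (q + r) ^+ 2 by apply: lerXn2r; rewrite ?nnegrE; lra.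
nra.
Qed.

Lemma comparable_scale_bounds (h A X : F) : 0 < h -> h <= 4 * A -> A <= 16 * h ->
  2 / (5 * A ^+ 2) <= X <= 2 / A ^+ 2 -> (640 * h ^+ 2)^-1 <= X <= 32 / h ^+ 2.
Proof.
move=> h0 hA Ah /andP[lo hi].
have A0 : 0 < A by lra.
have A2 : 0 < A ^+ 2 by rewrite exprn_gt0.
have h2 : 0 < h ^+ 2 by rewrite exprn_gt0.
have sqA_le : 5 * A ^+ 2 <= 2 * (640 * h ^+ 2).
  have : A ^+ 2 <= (16 * h) ^+ 2 by apply: lerXn2r; rewrite ?nnegrE; lra.
  by rewrite exprMn; lra.
have sqA_ge : 2 * h ^+ 2 <= 32 * A ^+ 2.
  have : h ^+ 2 <= (4 * A) ^+ 2 by apply: lerXn2r; rewrite ?nnegrE; lra.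
  by rewrite exprMn; lra.
have A5 : 0 < 5 * A ^+ 2 by lra.
have h640 : 0 < 640 * h ^+ 2 by lra.
apply/andP; split.
  by apply: le_trans lo; rewrite ler_pdivlMr // mulrC ler_pdivrMr.
by apply: le_trans hi _; rewrite ler_pdivrMr // mulrAC ler_pdivlMr.
Qed.
End sector_estimates.

Section complex_identities.
Context {R : rcfType}.
Local Open Scope complex_scope.

Lemma one_sub_mulconj (x y s t : R) :
  1 - (x +i* y) * (s +i* t)^* = (1 - (x * s + y * t)) +i* (x * t - y * s).
Proof. by apply/eqP; rewrite eq_complex /=; apply/andP; split; apply/eqP; ring. Qed.

Lemma Re_inv_sqr (p s : R) :
  complex.Re (((p +i* s) ^+ 2)^-1) = (p ^+ 2 - s ^+ 2) / (p ^+ 2 + s ^+ 2) ^+ 2.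
Proof. by rewrite expr2 /=; congr (_ / _); ring. Qed.

Lemma Re_realM (k : R) (z : R[i]) : complex.Re (k%:C * z) = k * complex.Re z.
Proof. by case: z => a b /=; rewrite mul0r subr0. Qed.

End complex_identities.

Section cabs.
Context {R : realType}.
Local Open Scope complex_scope.

Lemma cabs_real (x : R) : cabs x%:C = `|x|.
Proof. by rewrite /cabs /= expr0n /= addr0 sqrtr_sqr. Qed.

Lemma Re_le_cabs (z : R[i]) : complex.Re z <= cabs z.
Proof.
rewrite /cabs; apply: le_trans (ler_norm _) _; rewrite -sqrtr_sqr.
by apply: ler_wsqrtr; rewrite lerDl sqr_ge0.
Qed.

End cabs.

Lemma Re_bergman_kernel (R : realType) (p w : C2pt R) :
  complex.Re (bergman_kernel p w) = (pi ^+ 2)^-1 *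
    complex.Re ((((1 - z1 p * (z1 w)^*) * (1 - z2 p * (z2 w)^*)) ^+ 2)^-1)%C.
Proof.
rewrite /bergman_kernel -invfM.
have -> : forall u v : R[i], ((pi%:C * u ^+ 2) * (pi%:C * v ^+ 2) = (pi ^+ 2)%:C * (u * v) ^+ 2)%C.
  by move=> u v; rewrite rmorphXn /=; ring.
by rewrite invfM -fmorphV Re_realM.
Qed.

Lemma Re_bergman_kernel_corner (R : realType) (a b e : R) (p w : C2pt R) :
  0 < a -> 2 * a <= 1 -> 0 < b -> 2 * b <= 1 -> 64 * e = a * b ->
  corner_box a b p -> corner_box e e w ->
  (640 * pi ^+ 2 * (a * b) ^+ 2)^-1 <= complex.Re (bergman_kernel p w)
    <= 32 / (pi ^+ 2 * (a * b) ^+ 2).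
Proof.
move=> a0 a1 b0 b1 eab /corner_boxP[x1 y1 x2 y2] /corner_boxP[s1 t1 s2 t2].
have e0 : 0 < e by have := mulr_gt0 a0 b0; lra.
have ea : 64 * e <= a by rewrite eab ler_piMr //; lra.
have eb : 64 * e <= b by rewrite eab ler_piMl //; lra.
have [u1_ge u1_le v1_bd] := corner_mulconj_bounds _ _ _ _ _ _ a0 a1 e0 ea x1 y1 s1 t1.
have [u2_ge u2_le v2_bd] := corner_mulconj_bounds _ _ _ _ _ _ b0 b1 e0 eb x2 y2 s2 t2.
rewrite Re_bergman_kernel /z1 /z2 !one_sub_mulconj.
move: u1_ge u1_le v1_bd u2_ge u2_le v2_bd.
set u1 := 1 - _; set v1 := _ - p.1.1.2 * _; set u2 := 1 - _; set v2 := _ - p.2 * _.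
move=> u1_ge u1_le v1_bd u2_ge u2_le v2_bd.
have u10 : 0 < u1 by lra.
have u20 : 0 < u2 by lra.
rewrite (_ : (u1 +i* v1) * (u2 +i* v2) =
  (u1 * u2 - v1 * v2) +i* (u1 * v2 + v1 * u2))%C // Re_inv_sqr.
have [P_bd S_bd] := sector_mul_bounds _ _ _ _ u10 u20 v1_bd v2_bd.
have A_ge : a * b <= 4 * (u1 * u2).
  by have := ler_pM (ltW a0) (ltW b0) u1_ge u2_ge; lra.
have A_le : u1 * u2 <= 16 * (a * b).
  by have := ler_pM (ltW u10) (ltW u20) u1_le u2_le; lra.
have := comparable_scale_bounds _ _ _ (mulr_gt0 a0 b0) A_ge A_le
  (sector_Re_inv_sqr_bounds _ _ _ (mulr_gt0 u10 u20) P_bd S_bd).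
have P0 : 0 < pi ^+ 2 :> R by rewrite exprn_gt0 // pi_gt0.
move: P0; set P := pi ^+ 2 => P0.
have -> : (640 * P * (a * b) ^+ 2)^-1 = P^-1 * (640 * (a * b) ^+ 2)^-1.
  by rewrite !invfM; ring.
have -> : 32 / (P * (a * b) ^+ 2) = P^-1 * (32 / (a * b) ^+ 2).
  by rewrite !invfM; ring.
by rewrite !ler_pM2l ?invr_gt0.
Qed.

Section integral_bounds.
Context d (T : measurableType d) (R : realType) (mu : {measure set T -> \bar R}).

Lemma integral_indicZ (S : set T) (k : R) : measurable S -> 0 <= k ->
  (\int[mu]_w (k * \1_S w)%:E = k%:E * mu S)%E.
Proof.
move=> mS k0; under eq_integral do rewrite EFinM.
rewrite ge0_integralZl//; first by rewrite integral_indic// setIT.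
by apply/measurable_EFinP; exact: measurable_indic.
Qed.

(* The integrand need not be measurable, as it is only compared with
   multiples of an indicator through [ge0_le_integralT]; the upper bound [M]
   keeps the integral finite, since [Rintegral] is 0 on an infinite one. *)
Lemma Rintegral_ge_supported (S D : set T) (g : T -> R) (m M s : R) :
  measurable S -> S `<=` D -> mu S = s%:E -> 0 <= m -> 0 <= M ->
  (forall w, S w -> m <= g w <= M) -> (forall w, ~ S w -> g w = 0) ->
  m * s <= Rintegral mu D g.
Proof.
move=> mS SD muS m0 M0 g_S g_nS.
have sandwich w : (0 <= ((fun x => (g x)%:E) \_ D) w /\
    (m * \1_S w)%:E <= ((fun x => (g x)%:E) \_ D) w <= (M * \1_S w)%:E)%E.
  rewrite /patch indicE; have [wS|wS] := boolP (w \in S).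
    have /andP[g1 g2] := g_S w (set_mem wS).
    have Dw : w \in D by rewrite inE; apply: SD; rewrite -inE.
    by rewrite Dw !mulr1 !lee_fin; split; [lra | apply/andP; split; lra].
  rewrite !mulr0 g_nS; last by move=> Sw; move/negP: wS; rewrite inE.
  by case: ifP; rewrite /= lexx.
have /andP[I_ge I_le] : (m%:E * s%:E <= \int[mu]_(x in D) (g x)%:E <= M%:E * s%:E)%E.
  rewrite integral_mkcond -muS -!integral_indicZ //; apply/andP; split.
    apply: ge0_le_integralT => w; last by case/andP: (sandwich w).2.
    by rewrite lee_fin indicE; case: (_ \in _) => /=; lra.
  by apply: ge0_le_integralT => w; [case: (sandwich w) | case/andP: (sandwich w).2].
rewrite /Rintegral; move: I_ge I_le; rewrite -!EFinM.
by case: (\int[mu]_(x in D) _)%E => [r| |] //=; rewrite ?lee_fin // leye_eq.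
Qed.

End integral_bounds.

Section bidisc_estimates.
Context {R : realType}.
Local Open Scope complex_scope.

Definition indicC (S : set (C2pt R)) (w : C2pt R) : R[i] := (\1_S w)%:C.

Lemma measurable_Re_indicC (S : set (C2pt R)) : measurable S ->
  measurable_fun (bidisc R) (fun w => complex.Re (indicC S w)).
Proof. exact: measurable_indic. Qed.

Lemma measurable_Im_indicC (S : set (C2pt R)) :
  measurable_fun (bidisc R) (fun w => complex.Im (indicC S w)).
Proof. exact: measurable_cst. Qed.

Lemma cabs_indicC_le1 (S : set (C2pt R)) w : cabs (indicC S w) <= 1.
Proof. by rewrite cabs_real indicE; case: (_ \in _); rewrite ?normr1 ?normr0. Qed.

Lemma L1norm_indicC_le (S : set (C2pt R)) : measurable S ->
  (L1norm (indicC S) <= leb4 R S)%E.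
Proof.
move=> mS; rewrite /L1norm integral_mkcond -[leb4 R S]mul1e -integral_indicZ //.
apply: ge0_le_integralT => w.
  by rewrite /patch; case: ifP => _ //; rewrite lee_fin cabs_real normr_ge0.
rewrite /patch cabs_real indicE mul1r; case: (w \in S); case: ifP => _;
  by rewrite ?normr1 ?normr0 ?lee_fin.
Qed.

Lemma weak_type_rhs_indicC (S : set (C2pt R)) (C s lam : R) : measurable S ->
  leb4 R S = s%:E -> 0 <= C -> 0 < lam ->
  (C%:E * L1norm (indicC S) * lam^-1%:E <= (C * s / lam)%:E)%E.
Proof.
move=> mS muS C0 lam0; rewrite !EFinM; apply: lee_wpmul2r.
  by rewrite lee_fin invr_ge0 ltW.
by apply: lee_wpmul2l; rewrite ?lee_fin // -muS; exact: L1norm_indicC_le.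
Qed.

Lemma corner_in_disc (a x y : R) : 0 < a -> 2 * a <= 1 ->
  1 - 2 * a <= x < 1 - a -> 0 <= y <= a / 32 -> in_disc (x +i* y).
Proof.
move=> a0 a1 /andP[x1 x2] /andP[y1 y2].
rewrite /in_disc /cabs /= -sqrtr1 ltr_sqrt ?ltr01 //.
have : x ^+ 2 <= (1 - a) ^+ 2 by apply: lerXn2r; rewrite ?nnegrE; lra.
have : y ^+ 2 <= (a / 32) ^+ 2 by apply: lerXn2r; rewrite ?nnegrE; lra.
nra.
Qed.

Lemma corner_box_sub_bidisc (a b : R) : 0 < a -> 2 * a <= 1 -> 0 < b -> 2 * b <= 1 ->
  corner_box a b `<=` bidisc R.
Proof.
move=> a0 a1 b0 b1 p /corner_boxP[x1 y1 x2 y2].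
by split; [exact: (corner_in_disc _ _ _ a0 a1 x1 y1) | exact: (corner_in_disc _ _ _ b0 b1 x2 y2)].
Qed.

Lemma corner_box_sub_level (a b e lam : R) :
  0 < a -> 2 * a <= 1 -> 0 < b -> 2 * b <= 1 -> 64 * e = a * b ->
  lam < (640 * pi ^+ 2 * (a * b) ^+ 2)^-1 * ((e * e) ^+ 2 / 1024) ->
  corner_box a b `<=` bidisc R `&`
    [set z | lam < cabs (bergman_proj (indicC (corner_box e e)) z)].
Proof.
move=> a0 a1 b0 b1 eab lam_lt p Bp.
have ab0 : 0 < a * b by apply: mulr_gt0.
have e0 : 0 < e by lra.
have ab_le : a * b <= a by rewrite ler_piMr //; lra.
have e1 : 2 * e <= 1 by lra.
split; first exact: corner_box_sub_bidisc Bp.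
apply: lt_le_trans (Re_le_cabs _); apply: lt_le_trans lam_lt _.
have P0 : 0 < pi ^+ 2 :> R by rewrite exprn_gt0 // pi_gt0.
have h2 : 0 < (a * b) ^+ 2 by rewrite exprn_gt0.
have PH : 0 < pi ^+ 2 * (a * b) ^+ 2 by apply: mulr_gt0.
apply: (@Rintegral_ge_supported _ _ _ _ (corner_box e e) _ _ _
  (32 / (pi ^+ 2 * (a * b) ^+ 2))).
- exact: measurable_corner_box.
- exact: corner_box_sub_bidisc.
- exact: leb4_corner_box.
- by rewrite invr_ge0 -mulrA; apply/ltW/mulr_gt0; lra.
- by apply: divr_ge0; [lra | exact: ltW].
- move=> w Sw; rewrite /indicC (mulrC (bergman_kernel _ _)) Re_realM indicE mem_set // mul1r.
  exact: (Re_bergman_kernel_corner _ _ _ _ _ _ a0 a1 b0 b1 eab Bp Sw).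
- by move=> w Sw; rewrite /indicC (mulrC (bergman_kernel _ _)) Re_realM indicE memNset // mul0r.
Qed.

Lemma inv_pow2_double_le (i j : nat) : (i < j)%N -> 2 * (2 ^+ j)^-1 <= (2 ^+ i)^-1 :> R.
Proof.
move=> ij; rewrite -(subnK ij) exprD exprS.
have x1 : 1 <= 2 ^+ (j - i.+1) :> R by rewrite exprn_ege1 // ler1n.
have y0 : 0 < 2 ^+ i :> R by rewrite exprn_gt0.
move: x1 y0; set x := 2 ^+ (j - i.+1); set y := 2 ^+ i => x1 y0.
rewrite ler_pdivrMr ?mulr_gt0 //; last lra.
have -> : y^-1 * (x * (2 * y)) = 2 * x by field; rewrite gt_eqF.
lra.
Qed.

Definition dyadic_box (N j : nat) : set (C2pt R) :=
  corner_box (2 ^+ j)^-1 (2 ^+ (N - j))^-1.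

Lemma dyadic_box_index (N i j : nat) (p : C2pt R) :
  dyadic_box N i p -> dyadic_box N j p -> i = j.
Proof.
move=> /corner_boxP[/andP[x1 x2] _ _ _] /corner_boxP[/andP[y1 y2] _ _ _].
by case: (ltngtP i j) => // ij; exfalso; have := inv_pow2_double_le _ _ ij; lra.
Qed.

Lemma leb4_dyadic_box (N j : nat) : (j <= N)%N ->
  leb4 R (dyadic_box N j) = (((2 ^+ N)^-1) ^+ 2 / 1024)%:E.
Proof.
move=> jN; rewrite leb4_corner_box ?invr_gt0 ?exprn_gt0 //.
by rewrite -invfM -exprD subnKC.
Qed.

End bidisc_estimates.

Section dyadic_boxes.
Context {R : realType}.
Local Open Scope complex_scope.

Lemma leb4_dyadic_boxes (n N : nat) : (n <= N)%N ->
  leb4 R (\big[setU/set0]_(i < n) dyadic_box N i.+1) =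
  (n%:R * (((2 ^+ N)^-1) ^+ 2 / 1024))%:E.
Proof.
move=> nN; rewrite measure_bigsetU_ord.
- rewrite (eq_bigr (fun=> (((2 ^+ N)^-1) ^+ 2 / 1024)%:E)).
    by rewrite sumEFin sumr_const card_ord mulr_natl.
  by move=> i _; apply: leb4_dyadic_box; exact: leq_trans (ltn_ord i) nN.
- by move=> i; exact: measurable_corner_box.
- move=> i j _ _ [p [Bi Bj]]; apply/val_inj => /=.
  by have [] := dyadic_box_index _ _ _ _ Bi Bj.
Qed.

Lemma dyadic_boxes_sub_level (n N : nat) (lam : R) : (n < N)%N ->
  let h := (2 ^+ N)^-1 in
  lam < (640 * pi ^+ 2 * h ^+ 2)^-1 * ((h / 64 * (h / 64)) ^+ 2 / 1024) ->
  \big[setU/set0]_(i < n) dyadic_box N i.+1 `<=` bidisc R `&`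
    [set z | lam < cabs (bergman_proj (indicC (corner_box (h / 64) (h / 64))) z)].
Proof.
move=> nN h lam_lt p; rewrite -(bigcup_mkord _ (fun k => dyadic_box N k.+1)) => -[i /= iN].
have iN' : (i.+1 < N)%N by exact: leq_ltn_trans iN nN.
have hab : (2 ^+ i.+1)^-1 * (2 ^+ (N - i.+1))^-1 = h :> R.
  by rewrite -invfM -exprD subnKC // ltnW.
apply: corner_box_sub_level; rewrite ?hab //.
- by have := inv_pow2_double_le (R := R) 0 i.+1 (ltn0Sn i); rewrite expr0 invr1.
- by have := inv_pow2_double_le (R := R) 0 (N - i.+1); rewrite subn_gt0 expr0 invr1; apply.
- lra.
Qed.

Lemma leb4_level_dyadic_ge (n N : nat) (lam : R) : (n < N)%N ->
  let h := (2 ^+ N)^-1 in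
  lam < (640 * pi ^+ 2 * h ^+ 2)^-1 * ((h / 64 * (h / 64)) ^+ 2 / 1024) ->
  ((n%:R * (h ^+ 2 / 1024))%:E <= leb4 R (bidisc R `&`
    [set z | (lam < cabs (bergman_proj (indicC (corner_box (h / 64) (h / 64))) z))%R]))%E.
Proof.
move=> nN h lam_lt.
have := leb4_le R _ _ (dyadic_boxes_sub_level n N lam nN lam_lt).
by rewrite leb4_dyadic_boxes // ltnW.
Qed.

End dyadic_boxes.

Theorem theorem3p1 (R : realType) :
  ~ (exists C : R, 0 < C /\
      forall f : C2pt R -> R[i],
        measurable_fun (bidisc R) (fun w => complex.Re (f w)) ->
        measurable_fun (bidisc R) (fun w => complex.Im (f w)) ->
        (exists M : R, forall w, bidisc R w -> cabs (f w) <= M) ->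
        forall lam : R, 0 < lam ->
          (leb4 R (bidisc R `&` [set z | (lam < cabs (bergman_proj f z))%R])
            <= (C%:E * L1norm f) * (lam^-1)%R%:E)%E).
Proof.
case=> C [C0 weak11].
have P0 : 0 < pi ^+ 2 :> R by rewrite exprn_gt0 // pi_gt0.
pose K : R := 1024 * 1280 * C * pi ^+ 2.
have [n Kn] : exists n : nat, K < n%:R.
  by exists (Num.bound K); apply: archi_boundP; apply: mulr_ge0; [lra | exact: ltW].
pose N := n.+2; pose h : R := (2 ^+ N)^-1; pose e := h / 64.
pose S := corner_box e e; pose sig : R := (e * e) ^+ 2 / 1024.
pose m : R := (640 * pi ^+ 2 * h ^+ 2)^-1; pose lam := m * sig / 2.
have h0 : 0 < h by rewrite invr_gt0 exprn_gt0.
have e0 : 0 < e by rewrite /e; lra.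
have sig0 : 0 < sig by have := exprn_gt0 2 (mulr_gt0 e0 e0); rewrite /sig; lra.
have m0 : 0 < m by rewrite invr_gt0; apply: mulr_gt0; [lra | exact: exprn_gt0].
have lam_lt : lam < m * sig by have := mulr_gt0 m0 sig0; rewrite /lam; lra.
have lam0 : 0 < lam by have := mulr_gt0 m0 sig0; rewrite /lam; lra.
have mS : measurable S := measurable_corner_box e e.
have S_bd : exists M : R, forall w, bidisc R w -> cabs (indicC S w) <= M.
  by exists 1 => w _; exact: cabs_indicC_le1.
have := weak11 _ (measurable_Re_indicC _ mS) (measurable_Im_indicC S) S_bd lam lam0.
move/(le_trans (leb4_level_dyadic_ge _ _ _ (ltnSn n.+1) lam_lt)).
move/le_trans/(_ (weak_type_rhs_indicC _ _ _ _ mS (leb4_corner_box _ _ e0 e0) (ltW C0) lam0)).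
move: P0 Kn; rewrite lee_fin /lam /m /K; set P := pi ^+ 2 => P0 Kn.
rewrite (_ : C * sig / _ = 1280 * C * P * h ^+ 2); last first.
  by field; rewrite (gt_eqF h0) (gt_eqF P0) (gt_eqF sig0).
rewrite -/h => key; have : (n.+1)%:R * h ^+ 2 <= 1024 * 1280 * C * P * h ^+ 2 by lra.
by rewrite (ler_pM2r (exprn_gt0 2 h0)) -natr1; lra.
Qed.
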